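(* Let $n\ge 3$, let $d_1,\dots,d_{n-1}>0$, and let the gains satisfy $$k_1\ge k_2,\qquad k_i\ge k_{i+1}+1\ (i=2,\ldots,n-2),\qquad k_{n-1}\ge 1.$$ Writing $s_i(z)=\mathrm{sgn}(z_i)\,\mathrm{sgn}(|z_i|-d_i)$, consider the system on $\mathbb{R}^{n-1}$ $$\dot z_1=-(k_1+1)s_1(z)+k_2 s_2(z),$$ $$\dot z_i=s_{i-1}(z)-(k_i+1)s_i(z)+k_{i+1}s_{i+1}(z),\quad i=2,\ldots,n-2,$$ $$\dot z_{n-1}=s_{n-2}(z)-(k_{n-1}+1)s_{n-1}(z),$$ with right-hand side denoted $f(z)$. Then every Krasowskii solution $z(t)$ of this system converges, as $t\to\infty$, to (a subset of) the set $$\mathcal{E}=\Big\{z\in\mathbb{R}^{n-1}:\sum_{i=1}^{n-1}|z_i|\,\big||z_i|-d_i\big|=0\Big\},$$ i.e. $\mathrm{dist}(z(t),\mathcal{E})\to 0$.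
   Context: The sign function is $\mathrm{sgn}(z)=+1$ if $z\ge 0$ and $\mathrm{sgn}(z)=-1$ if $z<0$. A Krasowskii solution of $\dot z=f(z)$ is an absolutely continuous function $z(t)$ with $\dot z(t)\in\mathcal{K}(f(z(t)))$ for almost every $t$, where $\mathcal{K}(f(z))=\bigcap_{\delta>0}\overline{\mathrm{co}}\,(f(B(z,\delta)))$, $\overline{\mathrm{co}}$ denoting the closed convex hull and $B(z,\delta)$ the open ball of radius $\delta$ about $z$. The system describes the relative positions $z_i=x_i-x_{i+1}$ of $n$ agents on a line moving under $\dot x_1=-k_1\mathrm{sgn}(x_1-x_2)\mathrm{sgn}(|x_1-x_2|-d_1)$, $\dot x_i=\mathrm{sgn}(x_{i-1}-x_i)\mathrm{sgn}(|x_{i-1}-x_i|-d_{i-1})-k_i\mathrm{sgn}(x_i-x_{i+1})\mathrm{sgn}(|x_i-x_{i+1}|-d_i)$ for $2\le i\le n-1$, $\dot x_n=\mathrm{sgn}(x_{n-1}-x_n)\mathrm{sgn}(|x_{n-1}-x_n|-d_{n-1})$. *)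

From HB Require Import structures.
From mathcomp Require Import all_boot all_order all_algebra.
From mathcomp Require Import all_classical all_reals all_analysis.
Set Implicit Arguments. Unset Strict Implicit. Unset Printing Implicit Defensive.
Import Order.TTheory GRing.Theory Num.Theory.
Import numFieldNormedType.Exports.
Local Open Scope classical_set_scope.
Local Open Scope ring_scope.

Section Defs.
Variable R : realType.

Definition sgn (x : R) : R := if 0 <= x then 1 else -1.

Definition euclid_dist (m : nat) (x y : 'I_m -> R) : R :=
  Num.sqrt (\sum_(j < m) (x j - y j) ^+ 2).

Definition eball (m : nat) (z : 'I_m -> R) (delta : R) : set ('I_m -> R) :=
  [set y | euclid_dist y z < delta].

Definition conv_hull (m : nat) (A : set ('I_m -> R)) : set ('I_m -> R) :=
  [set x | exists (p : nat) (w : 'I_p -> R) (a : 'I_p -> ('I_m -> R)),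
     (forall i, 0 <= w i) /\ \sum_(i < p) w i = 1 /\ (forall i, A (a i)) /\
     (forall j, x j = \sum_(i < p) w i * a i j)].

Definition eclosure (m : nat) (A : set ('I_m -> R)) : set ('I_m -> R) :=
  [set x | forall e : R, 0 < e -> exists y, A y /\ euclid_dist x y < e].

Definition krasowskii (m : nat) (f : ('I_m -> R) -> ('I_m -> R))
    (z : 'I_m -> R) : set ('I_m -> R) :=
  [set v | forall delta : R, 0 < delta ->
     eclosure (conv_hull (f @` eball z delta)) v].

Definition abs_cont_on (a b : R) (g : R -> R) : Prop :=
  forall e : R, 0 < e -> exists2 delta : R, 0 < delta &
    forall (p : nat) (u v : 'I_p -> R),
      (forall i, a <= u i /\ u i <= v i /\ v i <= b) ->
      (forall i j, i != j -> v i <= u j \/ v j <= u i) ->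
      \sum_(i < p) (v i - u i) < delta ->
      \sum_(i < p) `|g (v i) - g (u i)| < e.

Definition krasowskii_solution (m : nat) (f : ('I_m -> R) -> ('I_m -> R))
    (t0 : R) (z : R -> ('I_m -> R)) : Prop :=
  (forall a b, t0 <= a -> a <= b -> forall j, abs_cont_on a b (fun t => z t j)) /\
  exists N : set R, (@lebesgue_measure R).-negligible N /\
    forall t, t0 < t -> ~ N t ->
      exists v : 'I_m -> R,
        (forall j, is_derive t 1 (fun s => z s j) (v j)) /\
        krasowskii f (z t) v.

(* 1-based access z_i (i = 1..m) to a point z : 'I_m -> R; 0 outside range *)
Definition comp (m : nat) (z : 'I_m -> R) (i : nat) : R :=
  oapp z 0 (insub i.-1).

Definition s_fun (m : nat) (d : nat -> R) (z : 'I_m -> R) (i : nat) : R :=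
  sgn (comp z i) * sgn (`|comp z i| - d i).

Definition rhs (m : nat) (k d : nat -> R) (z : 'I_m -> R) : 'I_m -> R :=
  fun j => let i := j.+1 in
    (if (1 < i)%N then s_fun d z i.-1 else 0)
    - (k i + 1) * s_fun d z i
    + (if (i < m)%N then k i.+1 * s_fun d z i.+1 else 0).

Definition Eset (m : nat) (d : nat -> R) : set ('I_m -> R) :=
  [set z | \sum_(j < m) `|z j| * `| `|z j| - d j.+1 | = 0].

End Defs.

From Pilot Require Import Defs.
From HB Require Import structures.
From mathcomp Require Import all_boot all_order all_algebra.
From mathcomp Require Import all_classical all_reals all_analysis.
From mathcomp Require Import lra zify.
Set Implicit Arguments. Unset Strict Implicit. Unset Printing Implicit Defensive.
Import Order.TTheory GRing.Theory Num.Theory.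
Import numFieldNormedType.Exports.
Local Open Scope classical_set_scope.
Local Open Scope ring_scope.

(* Each coordinate decouples. With V_i(z) = | |z_i| - d_i |, whose slope off
   {0, +-d_i} is s_i(z), the gain conditions make the coefficient -(k_i + 1) of s_i
   in f_i dominate the other two by 1, so s_i * zdot_i <= -1 for every Krasowskii
   velocity while z_i is not in {0, +-d_i}: s_i is locally constant there, and the
   bound passes to convex hulls and closures. Hence V_i(z_i(t)) never increases and
   decreases at unit rate off {0, +-d_i}; so z_i reaches {0, +-d_i} in finite time
   and stays there, and z(t) lies in E for all large t.
   That an absolutely continuous function with nonpositive derivative off a null
   set is nonincreasing is proved by continuity induction (a sup argument), after
   covering the null set by an open set of small measure. *)

Section RealAnalysis.
Variable R : realType.
Implicit Types (a b t u v w x y e eps : R) (g h : R -> R).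

Lemma is_derive_approx g t w : is_derive t 1 g w ->
  forall e, 0 < e -> exists2 del : R, 0 < del &
    forall x, `|x - t| < del -> `|g x - g t - w * (x - t)| <= e * `|x - t|.
Proof.
move=> [dg dv] e e0.
move/cvgrPdist_le: dg; rewrite /derive in dv; rewrite dv => /(_ e e0).
rewrite near_withinE /= => /nbhs_ballP[del /= del0 Hd].
exists del => // x xt.
have [->|nxt] := eqVneq x t; first by rewrite !subrr mulr0 subrr normr0 mulr0.
have := Hd (x - t); rewrite /ball /= sub0r normrN subr_eq0 => /(_ xt nxt).
rewrite /GRing.scale /= mulr1 subrK.
have -> : g x - g t - w * (x - t) = (x - t) * ((x - t)^-1 * (g x - g t) - w).
  by rewrite [RHS]mulrBr mulrA mulfV ?subr_eq0 // mul1r mulrC.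
by move=> H; rewrite normrM [e * _]mulrC ler_wpM2l // distrC.
Qed.

Lemma is_derive_straddle g t w : is_derive t 1 g w ->
  forall e, 0 < e -> exists2 del : R, 0 < del &
    forall u v, t - del < u -> u <= t -> t <= v -> v < t + del ->
      `|g v - g u - w * (v - u)| <= e * (v - u).
Proof.
move=> Dg e e0; have [del del0 H] := is_derive_approx Dg e0.
exists del => // u v h1 h2 h3 h4.
have := H v; rewrite ger0_norm ?subr_ge0 // => /(_ ltac:(lra)) Hv.
have := H u; rewrite ler0_norm ?subr_le0 // => /(_ ltac:(lra)) Hu.
have -> : g v - g u - w * (v - u) =
    (g v - g t - w * (v - t)) - (g u - g t - w * (u - t)) by rewrite !mulrBr; lra.
apply: le_trans (ler_normB _ _) _.
have -> : e * (v - u) = e * (v - t) + e * - (u - t) by rewrite -mulrDr; congr (_ * _); lra.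
exact: lerD.
Qed.

Lemma sum_disjoint_itv_le_measure (U : set R) (p : nat) (u v : nat -> R) :
  measurable U ->
  (forall i, (i < p)%N -> u i <= v i) ->
  (forall i j, (i < p)%N -> (j < p)%N -> i <> j -> v i <= u j \/ v j <= u i) ->
  (forall i, (i < p)%N -> forall y, u i < y -> y < v i -> U y) ->
  ((\sum_(i < p) (v i - u i))%:E <= (@lebesgue_measure R) U)%E.
Proof.
move=> mU uv disj sub.
pose F (i : 'I_p) := [set` `]u i, v i[] : set R.
have mF i : measurable (F i) by exact: measurable_itv.
have tF : trivIset setT F.
  move=> i j _ _ [y []]; rewrite /F /= !in_itv /= => /andP[a1 a2] /andP[b1 b2].
  apply: val_inj; apply: contrapT => ij.
  have [h|h] := disj i j (ltn_ord i) (ltn_ord j) ij.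
    by have := lt_trans (lt_le_trans a2 h) b1; rewrite ltxx.
  by have := lt_trans (lt_le_trans b2 h) a1; rewrite ltxx.
have <- : (\sum_(i < p) (@lebesgue_measure R) (F i))%E = (\sum_(i < p) (v i - u i))%:E.
  rewrite -sumEFin; apply: eq_bigr => i _; rewrite /F lebesgue_measure_itv /=.
  case: ltP => [_|]; first by rewrite EFinB.
  rewrite lee_fin => vu; have -> : v i = u i by apply/eqP; rewrite eq_le vu uv.
  by rewrite subrr.
have := measure_bigsetU_ord (@lebesgue_measure R) xpredT mF tF.
move=> <-; rewrite le_measure ?inE //.
- by apply: bigsetU_measurable => i _; exact: mF.
elim/big_ind: _ => //; first by move=> A B hA hB y [/hA|/hB].
by move=> i _ y; rewrite /F /= in_itv /= => /andP[h1 h2]; exact: sub h1 h2.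
Qed.

Lemma negligible_open_cover (N : set R) e : (@lebesgue_measure R).-negligible N ->
  0 < e -> exists U : set R, [/\ open U, N `<=` U & ((@lebesgue_measure R) U <= e%:E)%E].
Proof.
move=> /negligible_outer_measure N0 e0.
have [U [oU sU le]] := outer_measure_open_le N e0.
by exists U; split => //; rewrite N0 add0e in le.
Qed.

(* Invariant of the sup argument in [increment_cover_exists]: on [a, x], [h] grows
   at rate at most [eps] outside [p] disjoint intervals whose interiors lie in [U]. *)
Definition increment_cover h (U : set R) a eps x (p : nat) (u v : nat -> R) :=
  [/\ (forall i, (i < p)%N -> a <= u i /\ u i <= v i /\ v i <= x),
      (forall i j, (i < p)%N -> (j < p)%N -> i <> j -> v i <= u j \/ v j <= u i),
      (forall i, (i < p)%N -> forall y, u i < y -> y < v i -> U y) &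
      h x - h a <= eps * (x - a) + \sum_(i < p) `|h (v i) - h (u i)|].

Lemma increment_cover_extend_slow h U a eps x y p (u v : nat -> R) :
  0 <= eps -> increment_cover h U a eps x p u v -> x <= y ->
  h y - h x <= eps * (y - x) -> increment_cover h U a eps y p u v.
Proof.
move=> eps0 [H1 H2 H3 H4] xy hy; split => //.
  by move=> i ip; have [? [? ?]] := H1 i ip; split => //; split => //; apply: le_trans xy.
have -> : eps * (y - a) = eps * (y - x) + eps * (x - a) by rewrite -mulrDr; congr (_ * _); lra.
lra.
Qed.

Lemma increment_cover_extend_in h U a eps x y p (u v : nat -> R) :
  0 <= eps -> a <= x -> x <= y -> increment_cover h U a eps x p u v ->
  (forall z, x < z -> z < y -> U z) ->
  increment_cover h U a eps y p.+1 (fun i => if i == p then x else u i)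
                                   (fun i => if i == p then y else v i).
Proof.
move=> eps0 ax xy [H1 H2 H3 H4] hU; split.
- move=> i; rewrite ltnS leq_eqVlt => /orP[/eqP ->|ip]; first by rewrite eqxx; lra.
  rewrite (ltn_eqF ip); have [? [? ?]] := H1 i ip; split => //; split => //; lra.
- move=> i j; rewrite !ltnS (leq_eqVlt i) (leq_eqVlt j).
  move=> /orP[/eqP ->|ip] /orP[/eqP ->|jp] ij //.
  + rewrite eqxx (ltn_eqF jp); have [? [? ?]] := H1 j jp; right; lra.
  + rewrite eqxx (ltn_eqF ip); have [? [? ?]] := H1 i ip; left; lra.
  + by rewrite (ltn_eqF ip) (ltn_eqF jp); exact: H2.
- move=> i; rewrite ltnS leq_eqVlt => /orP[/eqP ->|ip]; first by rewrite eqxx.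
  by rewrite (ltn_eqF ip); exact: H3.
- rewrite big_ord_recr /= eqxx.
  under eq_bigr => i _ do rewrite /= (ltn_eqF (ltn_ord i)).
  have := ler_norm (h y - h x).
  have : eps * (x - a) <= eps * (y - a) by apply: ler_wpM2l => //; lra.
  lra.
Qed.

Section IncrementCover.
Variables (h : R -> R) (N U : set R) (a b eps : R).
Hypotheses (ab : a <= b) (eps0 : 0 < eps) (oU : open U)
  (NU : N `|` [set a] `|` [set b] `<=` U).
Hypothesis h_local_decrease : forall t, a < t -> t < b -> ~ N t ->
  forall e, 0 < e -> exists2 del : R, 0 < del &
    forall u v, t - del < u -> u <= t -> t <= v -> v < t + del -> h v - h u <= e * (v - u).

Let S := [set x | a <= x <= b /\ exists p (u v : nat -> R), increment_cover h U a eps x p u v].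

Let local_step c : a <= c -> c <= b -> exists2 del : R, 0 < del &
  (forall u v, c - del < u -> u <= c -> c <= v -> v < c + del -> h v - h u <= eps * (v - u))
  \/ (forall y, c - del < y -> y < c + del -> U y).
Proof.
move=> ac cb.
have [[ac' [cb' Nc]]|good] := pselect (a < c /\ c < b /\ ~ N c).
  by have [del del0 Hd] := h_local_decrease ac' cb' Nc eps0; exists del => //; left.
have /oU /nbhs_ballP[del del0 Hb] : U c.
  apply: NU; have [|nNc] := pselect (N c); first by left; left.
  have [->|nca] := eqVneq c a; first by left; right.
  have [->|ncb] := eqVneq c b; first by right.
  exfalso; apply: good; rewrite !lt_neqAle eq_sym nca ncb ac cb.
  by split.
exists del => //; right => y h1 h2.
by apply: Hb; rewrite /ball /= ltr_norml; apply/andP; split; lra.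
Qed.

Lemma increment_cover_exists : exists p (u v : nat -> R), increment_cover h U a eps b p u v.
Proof.
have Sa : S a.
  split; first by rewrite lexx ab.
  exists 0%N, (fun=> 0), (fun=> 0); split => //.
  by rewrite big_ord0 !subrr mulr0 addr0.
have hS : has_sup S by split; [exists a | exists b => x [/andP[_ ->]]].
pose c := sup S.
have ac : a <= c by exact: sup_upper_bound.
have cb : c <= b by apply: ge_sup; [exists a | move=> x [/andP[_ ->]]].
have [del del0 Hdel] := local_step ac cb.
have [x Sx cx] := sup_adherent del0 hS; rewrite -/c in cx.
have xc : x <= c by exact: sup_upper_bound.
case: Sx => /andP[ax xb] [p [u [v cov]]].
pose y := Num.min b (c + del / 2).
have cy : c <= y by rewrite /y le_min cb /=; lra.
have yb : y <= b by rewrite /y ge_min lexx.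
have Sy : S y.
  split; first by rewrite yb andbT; lra.
  case: Hdel => [Hd|Hu].
    exists p, u, v; apply: increment_cover_extend_slow cov _ _ => //.
    - exact: ltW.
    - lra.
    - by apply: Hd => //; rewrite /y gt_min; apply/orP; right; lra.
  exists p.+1, (fun i => if i == p then x else u i), (fun i => if i == p then y else v i).
  apply: increment_cover_extend_in => //; [exact: ltW | lra | move=> z h1 h2].
  apply: Hu; first lra.
  by apply: lt_le_trans h2 _; rewrite /y ge_min; apply/orP; right; lra.
have yc : y <= c by exact: sup_upper_bound.
have -> : b = y.
  apply/eqP; rewrite eq_le yb andbT /y le_min lexx /=.
  by move: yc; rewrite /y ge_min => /orP[]; lra.
by case: Sy => _.
Qed.

End IncrementCover.

Lemma abs_cont_le_of_local_decrease h (N : set R) a b :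
  a <= b -> abs_cont_on a b h -> (@lebesgue_measure R).-negligible N ->
  (forall t, a < t -> t < b -> ~ N t -> forall e, 0 < e -> exists2 del : R, 0 < del &
      forall u v, t - del < u -> u <= t -> t <= v -> v < t + del -> h v - h u <= e * (v - u)) ->
  h b <= h a.
Proof.
move=> ab hAC nN hloc; have ba1 : 0 < b - a + 1 by lra.
apply/ler_addgt0Pr => e e0; set eps := e / (b - a + 1).
have eps0 : 0 < eps by exact: divr_gt0.
have [del del0 AC] := hAC eps eps0.
have nNab : (@lebesgue_measure R).-negligible (N `|` [set a] `|` [set b]).
  have set1_negligible x : (@lebesgue_measure R).-negligible [set x].
    by exists [set x]; split => //; exact: lebesgue_measure_set1.
  by do 2?apply: negligibleU.
have [U [oU NU mU]] := negligible_open_cover nNab (divr_gt0 del0 (ltr0n R 2)).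
have [p [u [v [I1 I2 I3 I4]]]] := increment_cover_exists ab eps0 oU NU hloc.
have uv i : (i < p)%N -> u i <= v i by move=> ip; have [_ [? _]] := I1 i ip.
have := le_trans (sum_disjoint_itv_le_measure (measurable_realfun.open_measurable oU) uv I2 I3) mU.
rewrite lee_fin => Hs.
have Hl : \sum_(i < p) `|h (v i) - h (u i)| < eps.
  apply: (AC p (fun i => u i) (fun i => v i)); first by move=> i; exact: I1.
    by move=> i j ij; apply: I2 => // ij'; move/eqP: ij; apply; exact: val_inj.
  by apply: le_lt_trans Hs _; lra.
have : eps * (b - a) + eps = e by rewrite /eps -[X in _ + X]mulr1 -mulrDr divfK ?gt_eqF.
lra.
Qed.

Lemma abs_cont_on_lip1_comp a b g (q : R -> R) :
  (forall x y, `|q x - q y| <= `|x - y|) ->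
  abs_cont_on a b g -> abs_cont_on a b (q \o g).
Proof.
move=> q1 gAC e e0; have [del del0 Hd] := gAC e e0.
exists del => // p u v H1 H2 Hs; apply: le_lt_trans (Hd p u v H1 H2 Hs).
by apply: ler_sum => i _; exact: q1.
Qed.

Lemma abs_cont_on_add_id a b g : abs_cont_on a b g -> abs_cont_on a b (fun t => g t + t).
Proof.
move=> gAC e e0; have e20 : 0 < e / 2 by exact: divr_gt0.
have [del del0 Hd] := gAC _ e20.
exists (Num.min del (e / 2)); first by rewrite lt_min del0.
move=> p u v H1 H2; rewrite lt_min => /andP[Hs1 Hs2].
apply: (@le_lt_trans _ _ (\sum_(i < p) `|g (v i) - g (u i)| + \sum_(i < p) (v i - u i))).
  rewrite -big_split /=; apply: ler_sum => i _; have [_ [uv _]] := H1 i.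
  have -> : g (v i) + v i - (g (u i) + u i) = (g (v i) - g (u i)) + (v i - u i) by lra.
  by apply: le_trans (ler_normD _ _) _; rewrite lerD2l ger0_norm // subr_ge0.
by rewrite [e]splitr; exact: ltrD (Hd p u v H1 H2 Hs1) Hs2.
Qed.

Lemma abs_cont_on_uniform a b g : abs_cont_on a b g ->
  forall e, 0 < e -> exists2 del : R, 0 < del &
    forall x y, a <= x <= b -> a <= y <= b -> `|x - y| < del -> `|g x - g y| < e.
Proof.
move=> gAC e e0; have [del del0 Hd] := gAC e e0; exists del => // x y.
wlog xy : x y / x <= y.
  move=> W hx hy dxy; have [/W|/ltW/W] := leP x y; first exact.
  by move=> W'; rewrite distrC; apply: W' => //; rewrite distrC.
move=> /andP[ax xb] /andP[ay yb] dxy.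
have := Hd 1%N (fun=> x) (fun=> y); rewrite !big_ord1 distrC; apply.
- by move=> i; split => //; split.
- by move=> i j; rewrite !ord1 eqxx.
- by move: dxy; rewrite distrC ger0_norm // subr_ge0.
Qed.

Lemma continuous_abs_cont_max t0 g :
  (forall b, t0 <= b -> abs_cont_on t0 b g) -> continuous (fun x => g (Num.max x t0)).
Proof.
have max_lip x y : `|Num.max x t0 - Num.max y t0| <= `|x - y|.
  have := ler_norm (x - y); have := ler_norm (y - x); rewrite distrC => h1 h2.
  rewrite ler_norml; apply/andP; rewrite /Num.max.
  by case: ifP => /= h3; case: ifP => /= h4; split; lra.
move=> gAC x; apply/cvgrPdist_lt => e e0.
have tm z : t0 <= Num.max z t0 by rewrite le_max lexx orbT.
have M0 : t0 <= Num.max x t0 + 1 by rewrite (le_trans (tm x)) // lerDl.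
have [del del0 Hd] := abs_cont_on_uniform (gAC _ M0) e0.
apply/nbhs_ballP; exists (Num.min del 1); first by rewrite /= lt_min del0 ltr01.
move=> y /=; rewrite /ball /= lt_min => /andP[yd y1].
have hl := max_lip x y.
apply: Hd; rewrite ?tm ?lerDl //=.
- by have := ler_norm (Num.max y t0 - Num.max x t0); rewrite distrC; lra.
- exact: le_lt_trans hl yd.
Qed.

Lemma last_sublevel_time (phi : R -> R) s t c : continuous phi ->
  s <= t -> phi s <= c ->
  exists u, [/\ s <= u, u <= t, phi u <= c & forall w, u < w -> w <= t -> c < phi w].
Proof.
move=> cphi st hs.
pose A := [set x | s <= x <= t /\ phi x <= c].
have As : A s by split => //; rewrite lexx st.
have hA : has_sup A by split; [exists s | exists t => x [/andP[_ ->]]].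
have su : s <= sup A by exact: sup_upper_bound.
have ut : sup A <= t by apply: ge_sup; [exists s | move=> x [/andP[_ ->]]].
exists (sup A); split => //.
- rewrite leNgt; apply/negP => hc.
  have /cvgrPdist_lt/(_ (phi (sup A) - c)) := cphi (sup A).
  rewrite subr_gt0 => /(_ hc) /nbhs_ballP[del del0 Hb].
  have [x Ax xl] := sup_adherent del0 hA.
  have xu : x <= sup A by exact: sup_upper_bound.
  case: Ax => _ px; have := Hb x; rewrite /ball /= ger0_norm; last lra.
  by move=> /(_ ltac:(lra)); rewrite ltr_norml => /andP[_]; lra.
- move=> w uw wt; rewrite ltNge; apply/negP => pw.
  have : w <= sup A by apply: sup_upper_bound => //; split => //; apply/andP; split; lra.
  lra.
Qed.

Lemma first_root_time (psi : R -> R) s t w0 : continuous psi ->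
  s <= w0 -> w0 <= t -> psi w0 = 0 ->
  exists u, [/\ s <= u, u <= t, psi u = 0 & forall w, s <= w -> w < u -> psi w <> 0].
Proof.
move=> cpsi sw wt hw.
pose A := [set x | s <= x <= t /\ psi x = 0].
have Aw : A w0 by split => //; rewrite sw wt.
have lA : has_lbound A by exists s => x [/andP[-> _]].
have hA : has_inf A by split; [exists w0 | exact: lA].
have su : s <= inf A by apply: lb_le_inf; [exists w0 | move=> x [/andP[-> _]]].
have ut : inf A <= w0 by exact: ge_inf.
exists (inf A); split => //; first lra.
- apply/eqP; apply: contraT => hc.
  have hc' : 0 < `|psi (inf A)| by rewrite normr_gt0.
  have /cvgrPdist_lt/(_ _ hc') /nbhs_ballP[del del0 Hb] := cpsi (inf A).
  have [x Ax xl] := inf_adherent del0 hA.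
  have xu : inf A <= x by exact: ge_inf.
  case: Ax => _ px.
  by have := Hb x; rewrite /ball /= px subr0 ler0_norm; [rewrite ltxx; apply; lra | lra].
- move=> w sw' wu pw.
  have : inf A <= w by apply: ge_inf => //; split => //; apply/andP; split; lra.
  lra.
Qed.

Lemma continuous_lip1_comp (q G : R -> R) :
  (forall x y, `|q x - q y| <= `|x - y|) -> continuous G -> continuous (q \o G).
Proof.
move=> q1 cG x; apply/cvgrPdist_lt => e e0.
have /cvgrPdist_lt/(_ e e0) := cG x.
by apply: filterS => y; exact/le_lt_trans/q1.
Qed.

End RealAnalysis.

Section System.
Variable R : realType.
Implicit Types (d x y : R).

(* [gap d] is the Lyapunov function of a single coordinate; away from [0] and [+-d]
   its slope is [gap_sgn d], i.e. [s_i] is the gradient of [gap (d i) (z_i)]. *)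
Definition gap d x := `| `|x| - d |.
Definition gap_sgn d x := sgn x * sgn (`|x| - d).

Lemma gap_lip1 d x y : `|gap d x - gap d y| <= `|x - y|.
Proof.
apply: le_trans (ler_dist_dist _ _) _.
by rewrite opprB addrA subrK; exact: ler_dist_dist.
Qed.

Lemma gap0 d : 0 < d -> gap d 0 = d.
Proof. by move=> d0; rewrite /gap normr0 sub0r normrN gtr0_norm. Qed.

Lemma gap_eq0 d x : (gap d x == 0) = (`|x| == d).
Proof. by rewrite /gap normr_eq0 subr_eq0. Qed.

Lemma sgn_norm x : `|sgn x| = 1.
Proof. by rewrite /sgn; case: ifP; rewrite ?normrN normr1. Qed.

Lemma sgnK x : sgn x * sgn x = 1.
Proof. by rewrite /sgn; case: ifP; rewrite ?mulrNN mulr1. Qed.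

Lemma gap_sgn_norm d x : `|gap_sgn d x| = 1.
Proof. by rewrite normrM !sgn_norm mulr1. Qed.

Lemma gap_sgnK d x : gap_sgn d x * gap_sgn d x = 1.
Proof. by rewrite mulrACA !sgnK mulr1. Qed.

Lemma sgn_locally_const x y : `|y - x| < `|x| -> sgn y = sgn x.
Proof.
rewrite /sgn ltr_norml => /andP[h1 h2].
have [xp|xn] := leP 0 x.
  by rewrite ger0_norm // in h1 h2; case: ifP => // /negbT; rewrite -ltNge; lra.
by rewrite ltr0_norm // in h1 h2; case: ifP => //; lra.
Qed.

Lemma gap_sgn_locally_const d x y :
  `|y - x| < Num.min `|x| (gap d x) -> gap_sgn d y = gap_sgn d x.
Proof.
rewrite lt_min => /andP[h1 h2]; rewrite /gap_sgn (sgn_locally_const h1).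
congr (_ * _); apply: sgn_locally_const; apply: le_lt_trans h2.
by rewrite opprB addrA subrK; exact: ler_dist_dist.
Qed.

Lemma gap_locally_affine d x y : `|y - x| < Num.min `|x| (gap d x) ->
  gap d y - gap d x = gap_sgn d x * (y - x).
Proof.
rewrite lt_min /gap /gap_sgn /sgn => /andP[h1 h2].
have [xp|xn] := leP 0 x; rewrite ?(ger0_norm xp) ?(ltr0_norm xn) in h1 h2 *;
  move: h1; rewrite ltr_norml => /andP[h1 h1'].
- rewrite (@ger0_norm _ y) ?mul1r; last lra.
  have [xd|xd] := leP 0 (x - d); move: h2.
  + by rewrite mul1r (ger0_norm xd) ltr_norml => /andP[h2 h2']; rewrite ger0_norm; lra.
  + by rewrite mulN1r (ltr0_norm xd) ltr_norml => /andP[h2 h2'];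
      rewrite ltr0_norm; lra.
- rewrite (@ltr0_norm _ y); last lra.
  have [xd|xd] := leP 0 (- x - d); move: h2.
  + by rewrite mulr1 mulN1r (ger0_norm xd) ltr_norml => /andP[h2 h2']; rewrite ger0_norm; lra.
  + by rewrite mulrNN mulr1 mul1r (ltr0_norm xd) ltr_norml => /andP[h2 h2'];
      rewrite ltr0_norm; lra.
Qed.

Lemma coord_dist_le_euclid m (x y : 'I_m -> R) (j : 'I_m) :
  `|x j - y j| <= euclid_dist x y.
Proof.
rewrite /euclid_dist -sqrtr_sqr ler_wsqrtr // (bigD1 j) //= lerDl.
by apply: sumr_ge0 => i _; exact: sqr_ge0.
Qed.

Lemma conv_hull_coord_le m (A : set ('I_m -> R)) (j : 'I_m) c r (x : 'I_m -> R) :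
  (forall a, A a -> c * a j <= r) -> conv_hull A x -> c * x j <= r.
Proof.
move=> Ar [p [w [a [w0 [w1 [aA ->]]]]]].
rewrite mulr_sumr -[r]mul1r -w1 mulr_suml; apply: ler_sum => i _.
by rewrite mulrCA ler_wpM2l // Ar.
Qed.

Lemma eclosure_coord_le m (A : set ('I_m -> R)) (j : 'I_m) c r (x : 'I_m -> R) :
  (forall a, A a -> c * a j <= r) -> eclosure A x -> c * x j <= r.
Proof.
move=> Ar Ax; apply/ler_addgt0Pr => e e0.
have [y [Ay xy]] := Ax (e / (`|c| + 1)) (divr_gt0 e0 (ltr_wpDl (normr_ge0 c) ltr01)).
have := ler_norm (c * (x j - y j)); rewrite normrM.
have : `|c| * `|x j - y j| <= e.
  apply: le_trans (_ : (`|c| + 1) * (e / (`|c| + 1)) <= e); last first.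
    by rewrite mulrC divfK // gt_eqF // ltr_wpDl.
  apply: ler_pM; rewrite ?normr_ge0 ?lerDl //.
  exact: le_trans (coord_dist_le_euclid _ _ j) (ltW xy).
have := Ar y Ay; rewrite mulrBr; lra.
Qed.

Lemma comp_succ m (z : 'I_m -> R) (j : 'I_m) : Defs.comp z j.+1 = z j.
Proof. by rewrite /Defs.comp /= valK. Qed.

(* Off-diagonal weight of row [i] of the linear map [s |-> f] (the diagonal is [k i + 1]). *)
Definition coupling (m : nat) (k : nat -> R) (i : nat) : R :=
  (if (1 < i)%N then 1 else 0) + (if (i < m)%N then k i.+1 else 0).

Lemma s_fun_mul_rhs_le m (k d : nat -> R) (y : 'I_m -> R) (j : 'I_m) :
  coupling m k j.+1 <= k j.+1 -> ((j.+1 < m)%N -> 0 <= k j.+2) ->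
  s_fun d y j.+1 * rhs k d y j <= -1.
Proof.
rewrite /coupling /rhs /= => hk hk0.
set a := s_fun d y j; set s := s_fun d y j.+1; set c := s_fun d y j.+2.
have sa : s * a <= 1 by apply: le_trans (ler_norm _) _; rewrite normrM !gap_sgn_norm mulr1.
have sc : s * c <= 1 by apply: le_trans (ler_norm _) _; rewrite normrM !gap_sgn_norm mulr1.
rewrite mulrDr mulrBr mulrCA gap_sgnK mulr1.
have skc : (j.+1 < m)%N -> s * (k j.+2 * c) <= k j.+2.
  by move=> jm; rewrite mulrCA ler_piMr ?hk0.
by move: hk; case: ifP => _; case: ifP => [/skc ?|_] ?; rewrite ?mulr0; lra.
Qed.

Lemma krasowskii_gap_sgn_mul_le m (k d : nat -> R) (z v : 'I_m -> R) (j : 'I_m) :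
  coupling m k j.+1 <= k j.+1 -> ((j.+1 < m)%N -> 0 <= k j.+2) ->
  z j <> 0 -> `|z j| <> d j.+1 ->
  krasowskii (rhs k d) z v -> gap_sgn (d j.+1) (z j) * v j <= -1.
Proof.
move=> hk hk0 zj0 zjd Kv.
set rho := Num.min `|z j| (gap (d j.+1) (z j)).
have rho0 : 0 < rho.
  by rewrite lt_min !normr_gt0 subr_eq0; apply/andP; split; apply/eqP.
apply: (eclosure_coord_le _ (Kv _ rho0)) => a.
apply: conv_hull_coord_le => _ [b Bb <-].
have bj : `|b j - z j| < rho by apply: le_lt_trans Bb; exact: coord_dist_le_euclid.
by rewrite -(gap_sgn_locally_const bj) -comp_succ; exact: s_fun_mul_rhs_le.
Qed.

Lemma gains_ge1 n (k : nat -> R) :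
  (forall i, (2 <= i <= n - 2)%N -> k i.+1 + 1 <= k i) -> 1 <= k n.-1 ->
  forall i, (2 <= i <= n.-1)%N -> 1 <= k i.
Proof.
move=> hki hkn i /andP[]; move: {2}(n.-1 - i)%N (erefl (n.-1 - i)%N) => r.
elim: r i => [|r IH] i hr i2 iN; first by have -> : i = n.-1 by lia.
have := hki i ltac:(lia); have := IH i.+1 ltac:(lia) ltac:(lia) ltac:(lia); lra.
Qed.

Lemma coupling_le_gain n (k : nat -> R) : (3 <= n)%N -> k 2%N <= k 1%N ->
  (forall i, (2 <= i <= n - 2)%N -> k i.+1 + 1 <= k i) -> 1 <= k n.-1 ->
  forall j : 'I_n.-1, coupling n.-1 k j.+1 <= k j.+1 /\ ((j.+1 < n.-1)%N -> 0 <= k j.+2).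
Proof.
move=> hn hk1 hki hkn j; have jn := ltn_ord j.
split=> [|jn']; last by apply: le_trans ler01 (gains_ge1 hki hkn _); lia.
rewrite /coupling; case: ifP => j1; case: ifP => jn'.
- by have := hki j.+1 ltac:(lia); lra.
- have -> : j.+1 = n.-1 by lia.
  by rewrite addr0.
- have -> : nat_of_ord j = 0%N by lia.
  by rewrite add0r.
- lia.
Qed.

Section Coordinate.
Variables (g : R -> R) (N : set R) (t0 dj : R).
Hypotheses (dj0 : 0 < dj)
  (g_ac : forall a b, t0 <= a -> a <= b -> abs_cont_on a b g)
  (N0 : (@lebesgue_measure R).-negligible N)
  (g_deriv : forall t, t0 < t -> ~ N t -> exists w, is_derive t 1 g w /\
      (g t <> 0 -> `|g t| <> dj -> gap_sgn dj (g t) * w <= -1)).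

Let G x := g (Num.max x t0).

Let G_cont : continuous G.
Proof. exact: continuous_abs_cont_max (fun b => g_ac (lexx t0)). Qed.

Let GE x : t0 <= x -> G x = g x.
Proof. by move=> tx; rewrite /G (max_idPl tx). Qed.

Let gap_local_decrease tau : t0 < tau -> ~ N tau -> g tau <> 0 -> `|g tau| <> dj ->
  forall e, 0 < e -> exists2 del : R, 0 < del &
    forall u v, tau - del < u -> u <= tau -> tau <= v -> v < tau + del ->
      gap dj (g v) + v - (gap dj (g u) + u) <= e * (v - u).
Proof.
move=> t0tau Ntau g0 gd e e0.
have [w [Dw /(_ g0 gd) Sw]] := g_deriv t0tau Ntau.
set sig := gap_sgn dj (g tau) in Sw.
set rho := Num.min `|g tau| (gap dj (g tau)).
have rho0 : 0 < rho by rewrite lt_min !normr_gt0 subr_eq0; apply/andP; split; apply/eqP.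
have [ds ds0 Hs] := is_derive_straddle Dw e0.
have t0tau1 : t0 <= tau + 1 by lra.
have [dc dc0 Hc] := abs_cont_on_uniform (g_ac (lexx t0) t0tau1) rho0.
pose D := Num.min ds (Num.min dc (Num.min (tau - t0) 1)).
exists D; first by rewrite !lt_min ds0 dc0 subr_gt0 t0tau ltr01.
move=> u v h1 h2 h3 h4.
have [Dds Ddc Dt D1] : [/\ D <= ds, D <= dc, D <= tau - t0 & D <= 1].
  by rewrite /D !ge_min !lexx !orbT.
have gap_affine x : tau - D < x -> x < tau + D ->
    gap dj (g x) - gap dj (g tau) = sig * (g x - g tau).
  move=> x1 x2; apply: gap_locally_affine; apply: Hc; rewrite ?ltr_norml;
  by apply/andP; split; lra.
have := gap_affine u h1 ltac:(lra); have := gap_affine v ltac:(lra) h4.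
have A : sig * (g v - g u - w * (v - u)) <= e * (v - u).
  apply: le_trans (ler_norm _) _; rewrite normrM gap_sgn_norm mul1r.
  by apply: Hs; lra.
have vu : 0 <= v - u by lra.
have B : sig * w * (v - u) <= - (v - u) by nra.
rewrite mulrBr mulrA in A; lra.
Qed.

Lemma gap_decrease s t : t0 <= s -> s <= t ->
  (forall u, s < u -> u < t -> g u <> 0 /\ `|g u| <> dj) ->
  gap dj (g t) <= gap dj (g s) - (t - s).
Proof.
move=> t0s st away.
suff : gap dj (g t) + t <= gap dj (g s) + s by lra.
apply: (abs_cont_le_of_local_decrease (h := fun x => gap dj (g x) + x) st _ N0).
  exact: abs_cont_on_add_id (abs_cont_on_lip1_comp (gap_lip1 dj) (g_ac t0s st)).
move=> tau st1 st2 Ntau; have [g0 gd] := away tau st1 st2.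
by apply: gap_local_decrease => //; lra.
Qed.

Let gap_ge0 x : 0 <= gap dj x.
Proof. exact: normr_ge0. Qed.

Let gap_pos_level x : 0 < gap dj x -> `|x| <> dj.
Proof. by rewrite lt0r gap_eq0 => /andP[/eqP]. Qed.

Lemma gap_nonincreasing s t : t0 <= s -> s <= t -> gap dj (g t) <= gap dj (g s).
Proof.
move=> t0s st; rewrite leNgt; apply/negP => hst.
have cgap : continuous (gap dj \o G) := continuous_lip1_comp (gap_lip1 dj) G_cont.
have [u1 [su1 u1t pu1 above]] := last_sublevel_time cgap st (lexx _).
rewrite /= !GE // in pu1 above; last lra.
have {}above w : u1 < w -> w <= t -> gap dj (g s) < gap dj (g w).
  by move=> h1 h2; have := above w h1 h2; rewrite GE //; lra.
have [t1 [u1t1 t1t no_root gt1]] : exists t1, [/\ u1 < t1, t1 <= t,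
    forall w, u1 < w -> w < t1 -> g w <> 0 & gap dj (g s) < gap dj (g t1)].
  have [[w [w1 w2 w3]]|] := pselect (exists w, [/\ u1 < w, w < t & g w = 0]).
    have gw := above w w1 (ltW w2); rewrite w3 gap0 // in gw.
    have t0w : t0 <= w by lra.
    have [u3 [u13 u3t]] := first_root_time G_cont (ltW w1) (ltW w2) (etrans (GE t0w) w3).
    rewrite GE; last lra.
    move=> gu3 Hu3; exists u3; split => //.
    - rewrite lt_neqAle u13 andbT; apply/eqP => e.
      by move: pu1; rewrite e gu3 gap0 //; lra.
    - by move=> x h1 h2; rewrite -GE; [apply: Hu3|]; lra.
    - by rewrite gu3 gap0.
  move=> nz; exists t; split=> //.
  - by rewrite lt_neqAle u1t andbT; apply/eqP => e; move: pu1; rewrite e; lra.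
  - by move=> x h1 h2 gx; apply: nz; exists x.
suff away : forall u, u1 < u -> u < t1 -> g u <> 0 /\ `|g u| <> dj.
  by have := gap_decrease (le_trans t0s su1) (ltW u1t1) away; lra.
move=> u h1 h2; split; first exact: no_root.
by apply: gap_pos_level; have := above u h1 ltac:(lra); have := gap_ge0 (g s); lra.
Qed.

Lemma level_of_gap_lt t1 : t0 <= t1 -> gap dj (g t1) < dj ->
  forall t : R, t1 + dj <= t -> `|g t| = dj.
Proof.
move=> t01 q1 t ht; apply/eqP; rewrite -gap_eq0; apply/eqP.
have [[u [u1 u2 u3]]|nu] := pselect (exists u, [/\ t1 <= u, u <= t & gap dj (g u) = 0]).
  have := gap_nonincreasing (le_trans t01 u1) u2; have := gap_ge0 (g t); lra.
have away u : t1 < u -> u < t -> g u <> 0 /\ `|g u| <> dj.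
  move=> h1 h2; split.
    by move=> gu; have := gap_nonincreasing t01 (ltW h1); rewrite gu gap0 //; lra.
  by move=> /eqP; rewrite -gap_eq0 => /eqP gu; apply: nu; exists u; split => //; lra.
have t1t : t1 <= t by apply: le_trans ht; rewrite lerDl ltW.
by have := gap_decrease t01 t1t away; have := gap_ge0 (g t); lra.
Qed.

Lemma root_persists t1 : t0 <= t1 -> g t1 = 0 ->
  (forall t, t1 <= t -> dj <= gap dj (g t)) -> forall t : R, t1 <= t -> g t = 0.
Proof.
move=> t01 g1 big t ht; apply: contrapT => /eqP gt_neq0.
have qt : gap dj (g t) = dj.
  apply/eqP; rewrite eq_le big // andbT -{2}(gap0 dj0) -g1; exact: gap_nonincreasing.
have gt2 : `|g t| = 2 * dj.
  move: qt gt_neq0; rewrite /gap -normr_gt0; have [h|h] := leP dj `|g t|.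
    by rewrite ger0_norm ?subr_ge0 //; lra.
  by rewrite ltr0_norm ?subr_lt0 //; lra.
have cG : {within `[t1, t], continuous (Num.norm \o G)}.
  exact/continuous_subspaceT/(continuous_lip1_comp (@ler_dist_dist _ _)).
have [|c] := IVT (v := dj) ht cG.
  rewrite /= !GE ?g1 ?normr0 ?gt2 ?(le_trans t01 ht) // ge_min le_max.
  by rewrite (ltW dj0) ler_peMl ?ler1n ?orbT // ltW.
rewrite in_itv /= => /andP[c1 c2]; rewrite GE; last lra.
by move=> gc; have := big c c1; rewrite /gap gc subrr normr0 leNgt dj0.
Qed.

Lemma eventually_root_or_level : exists T, forall t, T <= t -> g t = 0 \/ `|g t| = dj.
Proof.
have [[t1 [t01 q1]]|small] := pselect (exists t1, t0 <= t1 /\ gap dj (g t1) < dj).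
  by exists (t1 + dj) => t ht; right; exact: level_of_gap_lt ht.
have big t : t0 <= t -> dj <= gap dj (g t).
  by move=> h; rewrite leNgt; apply/negP => ?; apply: small; exists t.
have [[t1 [t01 g1]]|noroot] := pselect (exists t1, t0 <= t1 /\ g t1 = 0).
  by exists t1 => t ht; left; apply: root_persists g1 _ _ ht => // u hu; apply: big; lra.
exfalso; pose t := t0 + gap dj (g t0) + 1.
have away u : t0 < u -> u < t -> g u <> 0 /\ `|g u| <> dj.
  move=> h1 _; split; first by move=> gu; apply: noroot; exists u; split => //; lra.
  exact/gap_pos_level/(lt_le_trans dj0 (big u (ltW h1))).
have t0t : t0 <= t by rewrite /t; have := gap_ge0 (g t0); lra.
by have := gap_decrease (lexx t0) t0t away; have := gap_ge0 (g t); rewrite /t; lra.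
Qed.

End Coordinate.

End System.

Lemma eventually_forall_ord (R : realType) m (P : 'I_m -> R -> Prop) :
  (forall j, exists T : R, forall t, T <= t -> P j t) ->
  exists T : R, forall t, T <= t -> forall j, P j t.
Proof.
move=> /choice[T HT]; exists (\sum_(j < m) `|T j|) => t ht j; apply: HT.
apply: le_trans ht; apply: le_trans (ler_norm _) _.
by rewrite (bigD1 j) //= lerDl sumr_ge0.
Qed.

Lemma euclid_dist_xx (R : realType) m (x : 'I_m -> R) : euclid_dist x x = 0.
Proof. by rewrite /euclid_dist big1 ?sqrtr0 // => i _; rewrite subrr expr0n. Qed.

Lemma Eset_of_coords (R : realType) m (d : nat -> R) (y : 'I_m -> R) :
  (forall j : 'I_m, y j = 0 \/ `|y j| = d j.+1) -> Eset d y.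
Proof.
move=> yE; apply: big1 => j _.
by case: (yE j) => ->; rewrite ?normr0 ?mul0r ?subrr ?normr0 ?mulr0.
Qed.

Theorem theorem1 (R : realType) (n : nat) (k d : nat -> R)
  (hn : (3 <= n)%N)
  (hd : forall i : nat, (1 <= i <= n.-1)%N -> 0 < d i)
  (hk1 : k 2%N <= k 1%N)
  (hki : forall i : nat, (2 <= i <= n - 2)%N -> k i.+1 + 1 <= k i)
  (hkn : 1 <= k n.-1)
  (t0 : R) (z : R -> ('I_n.-1 -> R))
  (hz : krasowskii_solution (@rhs R n.-1 k d) t0 z) :
  forall e : R, 0 < e -> exists T : R, forall t : R, T <= t ->
    exists y, @Eset R n.-1 d y /\ euclid_dist (z t) y < e.
Proof.
move=> e e0; case: hz => z_ac [N [N0 z_deriv]].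
have [T HT] : exists T : R, forall t, T <= t ->
    forall j : 'I_n.-1, z t j = 0 \/ `|z t j| = d j.+1.
  apply: eventually_forall_ord => j.
  have dj0 : 0 < d j.+1 by apply: hd; have := ltn_ord j; lia.
  apply: (eventually_root_or_level dj0 (fun a b ha hab => z_ac a b ha hab j) N0).
  move=> t ht Nt; have [v [Dv Kv]] := z_deriv t ht Nt.
  exists (v j); split => // zj0 zjd.
  have [hk hk0] := coupling_le_gain hn hk1 hki hkn j.
  exact: krasowskii_gap_sgn_mul_le hk hk0 zj0 zjd Kv.
exists T => t ht; exists (z t); split; first exact: Eset_of_coords (HT t ht).
by rewrite euclid_dist_xx.
Qed.
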